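(* Let $\mathcal A$ be a $\sigma$-structure, $\mathfrak C$ a class of $\sigma$-structures, $\mathcal B$ a $\sigma'$-structure and $c:\mathbb R^+\to\mathbb R^+$ strictly increasing. Suppose $(\phi,(\psi_{\mathcal C})_{\mathcal C\in\mathfrak C})$ is a $c$-reduction from $\mathcal A$ to $\mathcal B$ via $\mathfrak C$, and let $\mathfrak D=\{\phi(\mathcal C):\mathcal C\in\mathfrak C\}$. Then $\mathsf d_{\mathcal B,\mathfrak D}=\Omega\big(\mathsf d_{\mathcal A,\mathfrak C}\circ\lfloor c^{-1}\rfloor\big)$.
   Context: For structures $\mathcal A,\mathcal B$, $\mathsf D(\mathcal A,\mathcal B)$ is the set of all d-representations of $\operatorname{Hom}(\mathcal A,\mathcal B)$ and $\mathsf d(\mathcal A,\mathcal B)=\min_{C\in\mathsf D(\mathcal A,\mathcal B)}\|C\|$. For a class $\mathfrak C$ of structures, $\mathsf d_{\mathcal A,\mathfrak C}:\mathbb N\to\mathbb N$ is $\mathsf d_{\mathcal A,\mathfrak C}(m)=\max\{\mathsf d(\mathcal A,\mathcal C):\mathcal C\in\mathfrak C,\ \|\mathcal C\|\le m\}$, where $\|\mathcal C\|=\sum_{R}|R^{\mathcal C}|$. $\mathfrak C_{\sigma'}$ denotes the class of all $\sigma'$-structures. A $c$-reduction from $\mathcal A$ to $\mathcal B$ via $\mathfrak C$ is a pair $(\phi,(\psi_{\mathcal C})_{\mathcal C\in\mathfrak C})$ with $\phi:\mathfrak C\to\mathfrak C_{\sigma'}$ and $\psi_{\mathcal C}:\mathsf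 D(\mathcal B,\phi(\mathcal C))\to\mathsf D(\mathcal A,\mathcal C)$ such that: (1) for every $n\in\mathbb N$ there is $\mathcal C\in\mathfrak C$ with $\|\phi(\mathcal C)\|\ge n$; (2) $\|\phi(\mathcal C)\|\le c(\|\mathcal C\|)$ for all $\mathcal C\in\mathfrak C$; (3) $\|\psi_{\mathcal C}(C)\|\le\|C\|$ for all $\mathcal C\in\mathfrak C$ and $C\in\mathsf D(\mathcal B,\phi(\mathcal C))$. A factorisation circuit $C$ for finite sets $A,B$ is a finite directed acyclic graph with a unique sink $s$; input gates (no incoming edges) are labelled $\{a\mapsto b\}$, other nodes $\cup$ or $\times$; $\operatorname{dom}(g)$ is $\{a\}$ for an input gate and the union of the children's domains otherwise; $C$ is well-defined if each $\cup$-gate has the same domain as each child and children of each $\times$-gate have pairwise disjoint domains; then $S_g=\{\{a\mapsto b\}\}$ for inputs, the union of the children's sets for $\cup$-gates, and $\{h_1\cup\dots\cup h_r:h_i\in S_{g_i}\}$ for $\times$-gates, $S_C=S_s$. $\|C\|$ is the number of gates plus wires. A d-representation of $\operatorname{Hom}(\mathcal A,\mathcal B)$ is a well-defined factorisation circuit with $S_C=\operatorname{Hom}(\mathcal A,\mathcal B)$. All structures are assumed connected. *)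

From HB Require Import structures.
From mathcomp Require Import all_boot all_order all_algebra.
From mathcomp Require Import reals.
From mathcomp Require classical_sets.
Set Implicit Arguments. Unset Strict Implicit. Unset Printing Implicit Defensive.
Import Order.TTheory GRing.Theory Num.Theory.

(* ---------- classical sup / inf on nat (0 if it does not exist) ---------- *)
Definition nat_max (P : nat -> Prop) : nat :=
  classical_sets.xget 0%N (fun n => P n /\ forall m, P m -> (m <= n)%N).
Definition nat_min (P : nat -> Prop) : nat :=
  classical_sets.xget 0%N (fun n => P n /\ forall m, P m -> (n <= m)%N).

Record signature := Signature { sym : finType; arity : sym -> nat }.

Record structure (sg : signature) := Structure {
  univ : finType;
  interp : forall R : sym sg, {set (arity R).-tuple univ} }.

Definition ssize (sg : signature) (C : structure sg) : nat :=
  (\sum_(R : sym sg) #|interp C R|)%N.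

Definition gadj (sg : signature) (C : structure sg) : rel (univ C) :=
  fun x y => [exists R : sym sg, exists t in interp C R, (x \in (t : seq _)) && (y \in (t : seq _))].
Definition connected_structure (sg : signature) (C : structure sg) : Prop :=
  forall x y : univ C, connect (@gadj sg C) x y.

(* homomorphisms, given by their graphs as sets of pairs a |-> b *)
Definition is_hom (sg : signature) (A B : structure sg)
    (h : {ffun univ A -> univ B}) : bool :=
  [forall R : sym sg, forall t in interp A R, map_tuple h t \in interp B R].
Definition fgraph_set (A B : finType) (h : {ffun A -> B}) : {set A * B} :=
  [set (x, h x) | x : A].
Definition Hom (sg : signature) (A B : structure sg) : {set {set univ A * univ B}} :=
  [set fgraph_set h | h in [pred h : {ffun univ A -> univ B} | is_hom h]].

(* Acyclicity is encoded by a topological numbering: children of i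
   have smaller index (every finite DAG admits such a numbering). *)
Inductive gkind (A B : finType) := GIn of A & B | GUnion | GProd.
Arguments GUnion {A B}.
Arguments GProd {A B}.

Record circuit (A B : finType) := Circuit {
  cgates : nat;
  gate : 'I_cgates -> gkind A B;
  children : 'I_cgates -> seq 'I_cgates }.
Arguments cgates {A B} c : rename.
Arguments gate {A B} c _ : rename.
Arguments children {A B} c _ : rename.

Definition csize (A B : finType) (C : circuit A B) : nat :=
  (cgates C + \sum_(i : 'I_(cgates C)) size (children C i))%N.

Section Sem.
Variables (A B : finType) (C : circuit A B).
Local Notation n := (cgates C).

Fixpoint cdom_f (k : nat) (i : 'I_n) : {set A} :=
  match k with
  | 0 => set0
  | k.+1 => match gate C i with
            | GIn a _ => [set a]
            | _ => \bigcup_(j <- children C i) cdom_f k j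
            end
  end.

Fixpoint csem_f (k : nat) (i : 'I_n) : {set {set A * B}} :=
  match k with
  | 0 => set0
  | k.+1 => match gate C i with
            | GIn a b => [set [set (a, b)]]
            | GUnion => \bigcup_(j <- children C i) csem_f k j
            | GProd => foldr (fun j (acc : {set {set A * B}}) => [set h :|: g | h in csem_f k j, g in acc])
                             [set set0] (children C i)
            end
  end.

(* dom(g) and S_g (correct for well-formed circuits: recursion depth <= n) *)
Definition cdom (i : 'I_n) := cdom_f n i.
Definition csem (i : 'I_n) := csem_f n i.

Definition circuit_wf : Prop :=
  forall i : 'I_n, uniq (children C i) /\ (forall j, j \in children C i -> (j < i)%N) /\
     (forall a b, gate C i = GIn a b -> children C i = [::]).

Definition is_sink (s : 'I_n) : Prop := forall i : 'I_n, s \notin children C i.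

Definition well_defined : Prop :=
  forall i : 'I_n,
    (gate C i = GUnion -> forall j, j \in children C i -> cdom j = cdom i) /\
    (gate C i = GProd -> forall j1 j2, j1 \in children C i -> j2 \in children C i ->
        j1 != j2 -> [disjoint cdom j1 & cdom j2]).

Definition represents (S : {set {set A * B}}) : Prop :=
  circuit_wf /\ well_defined /\
  exists s, is_sink s /\ (forall s', is_sink s' -> s' = s) /\ csem s = S.
End Sem.

Definition is_drep (sg : signature) (A B : structure sg) (C : circuit (univ A) (univ B)) :=
  represents C (Hom A B).
Arguments is_drep {sg} A B C.

Definition dmin (sg : signature) (A B : structure sg) : nat :=
  nat_min (fun k => exists C, is_drep A B C /\ csize C = k).

Definition dfun (sg : signature) (A : structure sg) (K : structure sg -> Prop) (m : nat) : nat :=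
  nat_max (fun k => exists C, K C /\ (ssize C <= m)%N /\ dmin A C = k).

Definition c_reduction (R : realType) (c : R -> R) (sg sg' : signature)
    (A : structure sg) (B : structure sg') (K : structure sg -> Prop)
    (phi : structure sg -> structure sg')
    (psi : forall C : structure sg, circuit (univ B) (univ (phi C)) -> circuit (univ A) (univ C))
  : Prop :=
  (forall n : nat, exists C, K C /\ (n <= ssize (phi C))%N) /\
  (forall C, K C -> ((ssize (phi C))%:R <= c (ssize C)%:R)%R) /\
  (forall C, K C -> forall D, is_drep B (phi C) D ->
      is_drep A C (psi C D) /\ (csize (psi C D) <= csize D)%N).

(* floor(c^{-1}(n)) = the largest natural m with c(m) <= n *)
Definition floor_cinv (R : realType) (c : R -> R) (n : nat) : nat :=
  nat_max (fun m => (c m%:R <= n%:R)%R).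

Definition bigOmega (R : realType) (f g : nat -> nat) : Prop :=
  exists k : R, (0 < k)%R /\ exists n0 : nat, forall n, (n0 <= n)%N -> (k * (g n)%:R <= (f n)%:R)%R.
Arguments c_reduction {R} c {sg sg'} A B K phi psi.
Arguments bigOmega R f g.
Arguments dfun {sg} A K m.
Arguments dmin {sg} A B.
Arguments floor_cinv {R} c n.

From Pilot Require Import Defs.
From HB Require Import structures.
From mathcomp Require Import all_boot all_order all_algebra.
From mathcomp Require Import reals boolp.
From mathcomp Require Import zify.
Import Order.TTheory GRing.Theory Num.Theory.
Set Implicit Arguments. Unset Strict Implicit. Unset Printing Implicit Defensive.

(* Pulling a smallest d-representation of Hom(B, phi C) back along psi gives
   d(A, C) <= d(B, phi C), and ||phi C|| <= c(||C||) <= n as soon as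
   ||C|| <= floor(c^-1(n)); hence d_{A,K}(floor(c^-1(n))) <= d_{B,D}(n).
   The real work is to show that the minima and maxima in these definitions
   are attained.  Every Hom(A, B) is represented by the circuit taking the
   union, over all homomorphisms h, of the product of the input gates
   {a |-> h a}, whose size is bounded in |A| and |B|; and a connected
   structure D has at most 1 + ||D|| * sum of the arities elements, so
   d(B, D) is bounded in terms of ||D||. *)

Lemma nat_min_spec (P : nat -> Prop) x : P x -> P (nat_min P) /\ nat_min P <= x.
Proof.
move=> Px; have [|m /asboolP Pm minm] := @ex_minnP (fun n => `[< P n >]).
  by exists x; apply/asboolP.
have minP : exists n, P n /\ forall k, P k -> n <= k.
  by exists m; split=> // k /asboolP/minm.
by have [Pmin leminP] := classical_sets.xgetPex 0 minP; split; last exact: leminP.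
Qed.

Lemma nat_max_ub (P : nat -> Prop) b x :
  (forall m, P m -> m <= b) -> P x -> x <= nat_max P.
Proof.
move=> ubP Px; have [||m /asboolP Pm maxm] := @ex_maxnP (fun n => `[< P n >]) b.
- by exists x; apply/asboolP.
- by move=> n /asboolP/ubP.
have maxP : exists n, P n /\ forall k, P k -> k <= n.
  by exists m; split=> // k /asboolP/maxm.
by have [_ lemaxP] := classical_sets.xgetPex 0 maxP; apply: lemaxP.
Qed.

Lemma nat_max_cases (P : nat -> Prop) : nat_max P = 0 \/ P (nat_max P).
Proof. by rewrite /nat_max; case: classical_sets.xgetP => [n _ []|]; [right | left]. Qed.

Lemma bigcup_seqP (I : eqType) (T : finType) (s : seq I) (F : I -> {set T}) x :
  reflect (exists2 j, j \in s & x \in F j) (x \in \bigcup_(j <- s) F j).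
Proof.
elim: s => [|j s IH]; first by rewrite big_nil inE; constructor=> -[].
rewrite big_cons inE; apply: (iffP orP) => [[xj|/IH[k ks xk]]|[k]].
- by exists j; rewrite ?mem_head.
- by exists k; rewrite // inE ks orbT.
by rewrite inE => /predU1P[->|ks xk]; [left | right; apply/IH; exists k].
Qed.

Lemma cdom_fS (A B : finType) (C : circuit A B) k i :
  cdom_f (C:=C) k.+1 i = match gate C i with
                    | GIn a _ => [set a]
                    | _ => \bigcup_(j <- children C i) cdom_f (C:=C) k j
                    end.
Proof. by []. Qed.

Lemma csem_fS (A B : finType) (C : circuit A B) k i :
  csem_f (C:=C) k.+1 i =
    match gate C i with
    | GIn a b => [set [set (a, b)]]
    | GUnion => \bigcup_(j <- children C i) csem_f (C:=C) k j
    | GProd => foldr (fun j (acc : {set {set A * B}}) =>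
                        [set h :|: g | h in csem_f (C:=C) k j, g in acc])
                     [set set0] (children C i)
    end.
Proof. by []. Qed.

Lemma onth_lt_size (T : Type) (s : seq T) i : i < size s -> exists x, onth s i = Some x.
Proof. by rewrite -onthTE; case: onth => // x _; exists x. Qed.

Section UnionOfGraphs.
Variables (A B : finType) (fs : seq {ffun A -> B}).
Local Notation p := (size fs).
Local Notation q := #|A|.

(* Gates [i * q + rank a] are the inputs {a |-> fs_i a}, gates [p * q + i] the
   products over a of these inputs, and the last gate is their union. *)
Definition ngates := (p * q + p).+1.

Definition union_graphs_gate (k : 'I_ngates) : gkind A B :=
  if k < p * q then
    if (onth fs (k %/ q), onth (enum A) (k %% q)) is (Some f, Some a)
    then GIn a (f a) else GUnion
  else if k < p * q + p then GProd else GUnion.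

Definition union_graphs_children (k : 'I_ngates) : seq 'I_ngates :=
  if k < p * q then [::]
  else if k < p * q + p then
    [seq inord ((k - p * q) * q + enum_rank a) | a <- enum A]
  else [seq inord (p * q + i) | i <- iota 0 p].

Definition union_graphs := Circuit union_graphs_gate union_graphs_children.

Definition in_gate i (a : A) : 'I_ngates := inord (i * q + enum_rank a).
Definition prod_gate i : 'I_ngates := inord (p * q + i).
Definition top_gate : 'I_ngates := ord_max.

Lemma enum_rank_lt (a : A) : enum_rank a < q.
Proof. exact: ltn_ord. Qed.

Lemma in_gate_val i a : i < p -> in_gate i a = i * q + enum_rank a :> nat.
Proof.
move=> ip; rewrite inordK //; have := enum_rank_lt a; rewrite /ngates; nia.
Qed.

Lemma prod_gate_val i : i < p -> prod_gate i = p * q + i :> nat.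
Proof. by move=> ip; rewrite inordK // /ngates; lia. Qed.

Lemma gate_in_gate i a f :
  onth fs i = Some f -> gate union_graphs (in_gate i a) = GIn a (f a).
Proof.
move=> fsi; have ip : i < p by rewrite -onthTE fsi.
have aq := enum_rank_lt a.
rewrite /= /union_graphs_gate in_gate_val // ifT; last by nia.
rewrite divnMDl; last by lia.
rewrite divn_small // addn0 modnMDl modn_small // fsi onthE.
by rewrite (nth_map a) ?nth_enum_rank // -cardE.
Qed.

Lemma children_in_gate i a : i < p -> children union_graphs (in_gate i a) = [::].
Proof.
move=> ip; have aq := enum_rank_lt a.
by rewrite /= /union_graphs_children in_gate_val // ifT //; nia.
Qed.

Lemma gate_prod_gate i : i < p -> gate union_graphs (prod_gate i) = GProd.
Proof. by move=> ip; rewrite /= /union_graphs_gate prod_gate_val // ifF ?ifT //; lia. Qed.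

Lemma children_prod_gate i :
  i < p -> children union_graphs (prod_gate i) = [seq in_gate i a | a <- enum A].
Proof.
move=> ip; rewrite /= /union_graphs_children prod_gate_val // ifF ?ifT; try lia.
by rewrite addKn.
Qed.

Lemma gate_top : gate union_graphs top_gate = GUnion.
Proof. by rewrite /= /union_graphs_gate /= ifF ?ifF //; lia. Qed.

Lemma children_top : children union_graphs top_gate = [seq prod_gate i | i <- iota 0 p].
Proof. by rewrite /= /union_graphs_children /= ifF ?ifF //; lia. Qed.

Lemma gate_cases (k : 'I_ngates) :
  [\/ exists2 i, i < p & exists a, k = in_gate i a,
      exists2 i, i < p & k = prod_gate i
    | k = top_gate].
Proof.
have [kin|kin] := ltnP k (p * q).
  have q0 : 0 < q by case: (posnP q) kin => // ->; rewrite muln0.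
  have kq : k %% q < q by rewrite ltn_pmod.
  apply: Or31; exists (k %/ q); first by rewrite ltn_divLR.
  exists (enum_val (Ordinal kq)); apply: val_inj.
  by rewrite /= in_gate_val ?ltn_divLR // enum_valK /= -divn_eq.
have [kprod|ktop] := ltnP k (p * q + p).
  apply: Or32; exists (k - p * q); first by lia.
  by apply: val_inj; rewrite /= prod_gate_val ?subnKC // ltn_subLR // addnC.
apply: Or33; apply/val_inj/eqP; rewrite eqn_leq -ltnS.
by apply/andP; split; [exact: ltn_ord | exact: ktop].
Qed.

Lemma sem_in_gate t i a f : onth fs i = Some f ->
  cdom_f (C:=union_graphs) t.+1 (in_gate i a) = [set a] /\
  csem_f (C:=union_graphs) t.+1 (in_gate i a) = [set [set (a, f a)]].
Proof. by move=> fsi; rewrite cdom_fS csem_fS (gate_in_gate _ fsi). Qed.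

(* If A is empty a product gate has no children, so depth 1 suffices. *)
Lemma sem_prod_gate t i f : onth fs i = Some f -> (0 < q -> 0 < t) ->
  cdom_f (C:=union_graphs) t.+1 (prod_gate i) = setT /\
  csem_f (C:=union_graphs) t.+1 (prod_gate i) = [set fgraph_set f].
Proof.
move=> fsi t0; have ip : i < p by rewrite -onthTE fsi.
have sem_in a : cdom_f (C:=union_graphs) t (in_gate i a) = [set a] /\
                csem_f (C:=union_graphs) t (in_gate i a) = [set [set (a, f a)]].
  have q0 : 0 < q by apply/card_gt0P; exists a.
  by case: t t0 => [/(_ q0)//|t _]; apply: sem_in_gate.
rewrite cdom_fS csem_fS gate_prod_gate // children_prod_gate //; split.
  apply/setP => x; rewrite in_setT big_map; apply/bigcup_seqP.
  by exists x; rewrite ?mem_enum ?(sem_in x).1 ?inE.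
have -> : forall s, foldr (fun j (acc : {set {set A * B}}) =>
     [set h :|: g | h in csem_f (C:=union_graphs) t j, g in acc]) [set set0]
     [seq in_gate i a | a <- s] = [set \bigcup_(a <- s) [set (a, f a)]].
  elim=> [|a s IH] /=; first by rewrite big_nil.
  by rewrite IH (sem_in a).2 big_cons imset2_set1l imset_set1.
congr [set _]; apply/setP => -[x y]; apply/bigcup_seqP/imsetP => [[a _]|[a _ [-> ->]]].
  by rewrite inE => /eqP[-> ->]; exists a.
by exists a; rewrite ?mem_enum ?inE.
Qed.

Lemma sem_prod_gate_deep d i f : onth fs i = Some f -> p * q + p <= d ->
  cdom_f (C:=union_graphs) d (prod_gate i) = setT /\
  csem_f (C:=union_graphs) d (prod_gate i) = [set fgraph_set f].
Proof.
move=> fsi deep; have ip : i < p by rewrite -onthTE fsi.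
have -> : d = d.-1.+1 by lia.
by apply: sem_prod_gate => //; nia.
Qed.

Lemma cdom_top : 0 < p -> cdom (C:=union_graphs) top_gate = setT.
Proof.
move=> p0; have [f fs0] := onth_lt_size p0.
rewrite /cdom [cgates _]/= /ngates cdom_fS gate_top children_top big_map.
apply/setP => x; rewrite in_setT; apply/bigcup_seqP; exists 0; first by rewrite mem_iota.
by rewrite (sem_prod_gate_deep fs0 (leqnn _)).1 inE.
Qed.

Lemma csem_top : csem (C:=union_graphs) top_gate = [set fgraph_set f | f in fs].
Proof.
rewrite /csem [cgates _]/= /ngates csem_fS gate_top children_top big_map.
apply/setP => X; apply/bigcup_seqP/imsetP => [[i]|[f /onthP[i fsi] ->]].
  rewrite mem_iota => /= ip; have [f fsi] := onth_lt_size ip.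
  rewrite (sem_prod_gate_deep fsi (leqnn _)).2 => /set1P->.
  by exists f => //; apply/onthP; exists i.
exists i; last by rewrite (sem_prod_gate_deep fsi (leqnn _)).2 set11.
by rewrite mem_iota /= -onthTE fsi.
Qed.

Lemma union_graphs_wf : circuit_wf union_graphs.
Proof.
move=> k; case: (gate_cases k) => [[i ip [a ->]]|[i ip ->]|->].
- by rewrite children_in_gate.
- rewrite children_prod_gate // gate_prod_gate //; split; last split=> //.
    rewrite map_inj_uniq ?enum_uniq // => a b /(congr1 val).
    by rewrite /= !in_gate_val // => /addnI/val_inj/enum_rank_inj.
  move=> j /mapP[a _ ->]; have aq := enum_rank_lt a.
  by rewrite in_gate_val // prod_gate_val //; nia.
- rewrite children_top gate_top; split; last split=> //.
    rewrite map_inj_in_uniq ?iota_uniq // => i j; rewrite !mem_iota /= => ip jp.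
    by move/(congr1 val); rewrite /= !prod_gate_val // => /addnI.
  move=> j /mapP[i]; rewrite mem_iota /= => ip ->.
  by rewrite prod_gate_val // ltn_add2l.
Qed.

Lemma top_gate_sink : is_sink (C:=union_graphs) top_gate.
Proof.
move=> i; apply/negP => /(proj1 (proj2 (union_graphs_wf i))).
by rewrite ltnNge => /negP; apply; apply: leq_ord.
Qed.

Lemma sink_top_gate s : is_sink (C:=union_graphs) s -> s = top_gate.
Proof.
case: (gate_cases s) => [[i ip [a ->]]|[i ip ->]|//] sink_s.
  by have := sink_s (prod_gate i); rewrite children_prod_gate // map_f ?mem_enum.
by have := sink_s top_gate; rewrite children_top map_f // mem_iota.
Qed.

Lemma union_graphs_well_defined : well_defined union_graphs.
Proof.
move=> k; case: (gate_cases k) => [[i ip [a ->]]|[i ip ->]|->].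
- by have [f fsi] := onth_lt_size ip; rewrite (gate_in_gate _ fsi).
- rewrite gate_prod_gate // children_prod_gate //; split=> // _ j1 j2.
  move=> /mapP[a1 _ ->] /mapP[a2 _ ->] a12; have [f fsi] := onth_lt_size ip.
  rewrite /cdom [cgates _]/= /ngates !(sem_in_gate _ _ fsi).1 disjoints1 in_set1.
  by apply: contraNneq a12 => ->.
- rewrite gate_top; split=> // _ j; rewrite children_top => /mapP[i].
  rewrite mem_iota => /= ip ->; have [f fsi] := onth_lt_size ip.
  rewrite cdom_top; last by lia.
  by rewrite /cdom [cgates _]/= /ngates (sem_prod_gate_deep fsi (leqnSn _)).1.
Qed.

Lemma represents_union_graphs : represents union_graphs [set fgraph_set f | f in fs].
Proof.
split; first exact: union_graphs_wf.
split; first exact: union_graphs_well_defined.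
by exists top_gate; split; [exact: top_gate_sink | split; [exact: sink_top_gate | exact: csem_top]].
Qed.

Lemma csize_union_graphs : csize union_graphs <= ngates * (p + q + 1).
Proof.
rewrite /csize [cgates _]/= mulnDr muln1 addnC leq_add2r.
apply: leq_trans (_ : \sum_(k : 'I_ngates) (p + q) <= _); last first.
  by rewrite sum_nat_const card_ord.
apply: leq_sum => k _.
case: (gate_cases k) => [[i ip [a ->]]|[i ip ->]|->].
- by rewrite children_in_gate.
- by rewrite children_prod_gate // size_map -cardE leq_addl.
- by rewrite children_top size_map size_iota leq_addr.
Qed.

End UnionOfGraphs.

Lemma leq_card_bigcup (I : Type) (T : finType) (r : seq I) (P : pred I)
    (F : I -> {set T}) (G : I -> nat) :
  (forall i, P i -> #|F i| <= G i) ->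
  #|\bigcup_(i <- r | P i) F i| <= \sum_(i <- r | P i) G i.
Proof.
move=> leFG; apply: (big_ind2 (fun (X : {set T}) n => #|X| <= n)) => //.
  by rewrite cards0.
move=> X1 n1 X2 n2 le1 le2; apply: leq_trans (leq_card_setU X1 X2) _.
exact: leq_add.
Qed.

(* With at least two elements, every x has a Gaifman neighbour, so it occurs
   in some tuple of some relation. *)
Lemma card_univ_connected (sg : signature) (D : structure sg) :
  connected_structure D -> #|univ D| <= (ssize D * \sum_(R : sym sg) arity R).+1.
Proof.
move=> connD; have [/leq_trans->//|/card_gt1P[a [b [_ _ ab]]]] := leqP #|univ D| 1.
pose occurring :=
  \bigcup_(R : sym sg) \bigcup_(t in interp D R) [set x | x \in (t : seq _)].
have occurs x : x \in occurring.
  pose y := if x == a then b else a.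
  have xy : x != y by rewrite /y; case: (eqVneq x a) => [->|].
  have /connectP[[|z pth] /= xpth last_y] := connD x y.
    by rewrite last_y eqxx in xy.
  case/andP: xpth => /existsP[R /existsP[t /andP[tR /andP[xt _]]]] _.
  by apply/bigcupP; exists R => //; apply/bigcupP; exists t; rewrite ?inE.
rewrite ltnW // ltnS -cardsT (_ : setT = occurring); last first.
  by apply/setP => x; rewrite inE occurs.
apply: leq_trans
  (@leq_card_bigcup _ _ _ xpredT _ (fun R => #|interp D R| * arity R) _) _.
  move=> R _; apply: leq_trans
    (@leq_card_bigcup _ _ _ (mem (interp D R)) _ (fun=> arity R) _) _.
    by move=> t _; rewrite cardsE (leq_trans (card_size _)) ?size_tuple.
  by rewrite sum_nat_const.
rewrite big_distrr leq_sum // => R _; rewrite leq_mul2r /ssize (bigD1 R) //=.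
by rewrite leq_addr orbT.
Qed.

Definition hom_circuit_bound (a b : nat) := (b ^ a * a + b ^ a).+1 * (b ^ a + a + 1).

Lemma leq_hom_circuit_bound a b1 b2 :
  b1 <= b2 -> hom_circuit_bound a b1 <= hom_circuit_bound a b2.
Proof.
move=> b12; have le_exp : b1 ^ a <= b2 ^ a by case: a => // a; rewrite leq_exp2r.
by rewrite leq_mul ?ltnS ?leq_add ?leq_mul ?leq_add2r.
Qed.

Lemma exists_drep (sg : signature) (A B : structure sg) :
  exists2 C, is_drep A B C & csize C <= hom_circuit_bound #|univ A| #|univ B|.
Proof.
pose homs := [seq h <- enum {ffun univ A -> univ B} | is_hom h].
exists (union_graphs homs).
  rewrite /is_drep (_ : Defs.Hom A B = [set fgraph_set h | h in homs]).
    exact: represents_union_graphs.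
  apply/setP => X; apply/imsetP/imsetP => -[h hh ->]; exists h => //.
    by rewrite mem_filter mem_enum andbT; move: hh; rewrite inE.
  by move: hh; rewrite mem_filter mem_enum andbT inE.
have homs_le : size homs <= #|univ B| ^ #|univ A|.
  by rewrite size_filter (leq_trans (count_size _ _)) // -cardE card_ffun.
apply: leq_trans (csize_union_graphs homs) _.
by rewrite /ngates leq_mul ?ltnS ?leq_add ?leq_mul ?leq_add2r.
Qed.

Lemma dmin_spec (sg : signature) (A B : structure sg) C : is_drep A B C ->
  (exists D, is_drep A B D /\ csize D = dmin A B) /\ dmin A B <= csize C.
Proof. by move=> C_drep; apply: nat_min_spec; exists C. Qed.

Lemma dmin_le (sg : signature) (A B : structure sg) C :
  is_drep A B C -> dmin A B <= csize C.
Proof. by case/dmin_spec. Qed.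

Lemma dmin_drep (sg : signature) (A B : structure sg) :
  exists2 C, is_drep A B C & csize C = dmin A B.
Proof. by have [C /dmin_spec[[D [? ?]] _] _] := exists_drep A B; exists D. Qed.

Lemma dmin_le_bound (sg : signature) (A B : structure sg) :
  dmin A B <= hom_circuit_bound #|univ A| #|univ B|.
Proof. by have [C /dmin_le/leq_trans] := exists_drep A B; apply. Qed.

Lemma dmin_le_pullback (sg sg' : signature) (A C : structure sg) (B D : structure sg')
    (psi : circuit (univ B) (univ D) -> circuit (univ A) (univ C)) :
  (forall E, is_drep B D E -> is_drep A C (psi E) /\ csize (psi E) <= csize E) ->
  dmin A C <= dmin B D.
Proof.
move=> psi_drep; have [E E_drep <-] := dmin_drep B D.
by have [/dmin_le/leq_trans] := psi_drep E E_drep; apply.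
Qed.

Lemma dmin_le_dfun (sg : signature) (A : structure sg) (K : structure sg -> Prop) C m :
  (forall D, K D -> connected_structure D) -> K C -> ssize C <= m ->
  dmin A C <= dfun A K m.
Proof.
move=> connK KC Cm; pose X := (m * \sum_(R : sym sg) arity R).+1.
apply: (@nat_max_ub _ (hom_circuit_bound #|univ A| X)); last by exists C.
move=> _ [D [KD [Dm <-]]]; apply: leq_trans (dmin_le_bound A D) _.
apply/leq_hom_circuit_bound/(leq_trans (card_univ_connected (connK D KD))).
by rewrite ltnS leq_mul2r Dm orbT.
Qed.

Lemma dfun_attained (sg : signature) (A : structure sg) (K : structure sg -> Prop) m :
  dfun A K m = 0 \/ exists2 C, K C /\ ssize C <= m & dmin A C = dfun A K m.
Proof.
case: (nat_max_cases (fun k => exists C, K C /\ ssize C <= m /\ dmin A C = k)) => [|[C]].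
  by left.
by move=> [KC [Cm dC]]; right; exists C.
Qed.

(* When no m satisfies c m <= n, floor_cinv c n is the junk value 0. *)
Lemma floor_cinvP (R : realType) (c : R -> R) n :
  (c 0 <= n%:R)%R -> (c (floor_cinv c n)%:R <= n%:R)%R.
Proof.
by move=> c0n; rewrite /floor_cinv; case: (nat_max_cases (fun m => c m%:R <= n%:R)%R) => [->|].
Qed.

Unset Implicit Arguments. Set Strict Implicit. Set Printing Implicit Defensive.

Theorem lemma6p2 (R : realType) (sg sg' : signature)
  (A : structure sg) (K : structure sg -> Prop) (B : structure sg')
  (c : R -> R)
  (c_nonneg : forall x : R, (0 <= x)%R -> (0 <= c x)%R)
  (c_incr : forall x y : R, (0 <= x)%R -> (x < y)%R -> (c x < c y)%R)
  (phi : structure sg -> structure sg')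
  (psi : forall C : structure sg, circuit (univ B) (univ (phi C)) -> circuit (univ A) (univ C))
  (hred : c_reduction c A B K phi psi)
  (connA : connected_structure A) (connB : connected_structure B)
  (connK : forall C, K C -> connected_structure C)
  (connD : forall C, K C -> connected_structure (phi C)) :
  bigOmega R (dfun B (fun D => exists C, K C /\ D = phi C))
             (fun n => dfun A K (floor_cinv c n)).
Proof.
case: hred => [_ [size_phi psi_drep]].
have c_le x y : (0 <= x)%R -> (x <= y)%R -> (c x <= c y)%R.
  by move=> x0; rewrite le_eqVlt => /predU1P[->|/(c_incr _ _ x0)/ltW].
have [n0 c0_le_n0] : exists n0 : nat, (c 0 <= n0%:R)%R.
  by eexists; apply/ltW/archi_boundP/c_nonneg.
exists 1%R; split=> //; exists n0 => n n0n; rewrite mul1r ler_nat.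
have [->//|[C [KC sizeC] <-]] := dfun_attained A K (floor_cinv c n).
apply: leq_trans (dmin_le_pullback (psi_drep C KC)) _.
apply: dmin_le_dfun; [by move=> _ [C' [KC' ->]]; exact: connD | by exists C |].
rewrite -(ler_nat R); apply: le_trans (size_phi C KC) _.
apply: le_trans (floor_cinvP (le_trans c0_le_n0 _)); last by rewrite ler_nat.
by apply: c_le; rewrite ?ler_nat.
Qed.
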